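(* Let $N\ge3$, $G\in\mathcal G_3(N)$ and $u\in V(G)$. Then $u$ is not a leaf of $G$ if and only if $c(G|s)=\infty$ for every state $s=(x^1,\dots,x^{N-1},u,N)\in S^N\cap S_{nc}$ (robber on $u$, robber to move).
   Context: Board and moves: $G=(V,E)$ finite, simple, connected, undirected. There are $N\ge3$ tokens, cops $C_1,\dots,C_{N-1}$ (tokens $1,\dots,N-1$) and robber $R$ (token $N$). A state is $s=(x^1,\dots,x^N,n)$ with $x^i\in V$ the position of token $i$ and $n$ the token to move; $S^n$ is the set of states with token $n$ to move; $s$ is a capture state if $x^i=x^N$ for some $i\le N-1$, and $S_{nc}$ is the set of noncapture states. In each turn the token to move moves to a vertex of its closed neighbourhood (may stay put); order $C_1,\dots,C_{N-1},R,C_1,\dots$; the game ends at the first capture. The modified cops-and-robber (CR) game is the two-player zero-sum game where one player controls all cops, the other the robber, and if capture occurs at time $t$ (number of turns) the robber's payoff is $-\gamma^t$ ($0$ if never), $\gamma\in(0,1)$. $\widehat\Sigma^n$ denotes the set of pure positional strategies of token $n$ that are components of optimal strategies in this game (CR-optimal strategies). For $s\in S_{nc}$, whenever CR-optimal play from $s$ leads to capture, it is always the same cop, denoted $\widehat C(s)$, that effects it. State cop number. For $s\in S_{nc}$, $c(G|s)=c_N(G|s)$ is the minimum $k\in\{1,\dots,N-1\}$ for which there exist $k$ cops and strategies for them such that, starting from $s$, a capture (by any cop) occurs whatever the other $N-k$ tokens (including $R$) do; $c(G|s)=\infty$ if no such $k$ exists. $c(G)$ is the classical cop number of $G$. Graph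 classes. $\mathcal G(N)=\{G: c(G)>N-1\}$; $\mathcal G_1(N)=\{G\in\mathcal G(N):\exists s\in S_{nc}\text{ with } c(G|s)\in\{2,\dots,N-1\}\}$; $\mathcal G_1'(N)=\mathcal G(N)\setminus\mathcal G_1(N)$; $\mathcal G_2(N)=\{G\in\mathcal G(N): c(G|s)=\infty\text{ for all } s\in S^N\cap S_{nc}\}$; $\mathcal G_2'(N)=\mathcal G_1'(N)\setminus\mathcal G_2(N)$. Say that a state $s\in S_{nc}$ with $c(G|s)=1$ and $\widehat C(s)=C_m$ has the sure-capture property if for every $\widehat\sigma^m\in\widehat\Sigma^m$ and every strategy profile $\sigma^{-m}$ of the other tokens, play from $s$ under $(\widehat\sigma^m,\sigma^{-m})$ ends in a capture in which $C_m$ is on the robber's vertex. $\mathcal G_3(N)$ is the set of $G\in\mathcal G_2'(N)$ in which every $s\in S_{nc}$ with $c(G|s)=1$ has the sure-capture property. *)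

From Stdlib Require Import Reals ClassicalEpsilon.
From mathcomp Require Import all_boot.

Set Implicit Arguments.
Unset Strict Implicit.
Unset Printing Implicit Defensive.

Definition simple_connected_graph (T : finType) (e : rel T) : Prop :=
  symmetric e /\ irreflexive e /\ (forall x y : T, connect e x y).

Definition closed_nbhd (T : finType) (e : rel T) (x y : T) : bool :=
  (x == y) || e x y.

Definition leaf (T : finType) (e : rel T) (u : T) : bool :=
  #|[set v | e u v]| == 1.

(* Classical game with k cops: the cops choose initial vertices, then the    *)
(* robber chooses his; then alternately all cops move (each to its closed    *)
(* neighbourhood), then the robber moves. Cops win if some cop eventually   *)

Section Classical.
Variables (T : finType) (e : rel T).

(* (cop positions, robber position, cops_to_move) *)
Definition cstate (k : nat) : Type := ({ffun 'I_k -> T} * T * bool)%type.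

Definition ccapture (k : nat) (s : cstate k) : Prop :=
  exists i : 'I_k, s.1.1 i = s.1.2.

Definition cop_hist_strategy (k : nat) : Type :=
  seq (cstate k) -> cstate k -> {ffun 'I_k -> T}.

Definition cop_hist_strategy_legal (k : nat) (sg : cop_hist_strategy k) : Prop :=
  forall h (s : cstate k) (i : 'I_k), closed_nbhd e (s.1.1 i) (sg h s i).

Definition classical_play (k : nat) (sg : cop_hist_strategy k)
    (p : nat -> cstate k) : Prop :=
  forall t : nat,
    if (p t).2 then
      p t.+1 = (sg [seq p i | i <- iota 0 t] (p t), (p t).1.2, false)
    else
      exists r' : T, closed_nbhd e (p t).1.2 r' /\
                     p t.+1 = ((p t).1.1, r', true).

Definition cop_win (k : nat) : Prop :=
  exists c0 : {ffun 'I_k -> T}, forall r0 : T,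
    exists sg : cop_hist_strategy k, cop_hist_strategy_legal sg /\
      forall p : nat -> cstate k, p 0 = (c0, r0, true) ->
        classical_play sg p -> exists t, ccapture (p t).

(* c(G) > m, with c(G) = min { k >= 1 | k cops win } *)
Definition cop_number_gt (m : nat) : Prop :=
  forall k, 1 <= k <= m -> ~ cop_win k.

End Classical.

(* The N-token game, N = n.+1: tokens 'I_n.+1, cops C_1..C_{N-1} are the     *)
(* tokens of value 0..n-1, the robber R is ord_max (value n = N-1).          *)
(* Move order C_1, ..., C_{N-1}, R, C_1, ...                                 *)

Section Game.
Variables (T : finType) (e : rel T) (n : nat).

Definition token : Type := 'I_n.+1.
Definition robber : token := ord_max.
Definition is_cop (i : token) : bool := i != robber.

(* a state: positions of the N tokens and the token to move *)
Definition state : Type := ({ffun 'I_n.+1 -> T} * 'I_n.+1)%type.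

Definition capture (s : state) : bool :=
  [exists i : 'I_n.+1, is_cop i && (s.1 i == s.1 robber)].

Definition next_tok (i : token) : token := inord (i.+1 %% n.+1).

Definition move (s : state) (y : T) : state :=
  ([ffun j => if j == s.2 then y else s.1 j], next_tok s.2).

(* joint (history-dependent) strategy of a coalition of cops:
   history of previous states, current state |-> vertex for the mover *)
Definition coal_strategy : Type := seq state -> state -> T.

Definition coal_strategy_legal (A : {set token}) (sg : coal_strategy) : Prop :=
  forall h (s : state), s.2 \in A -> closed_nbhd e (s.1 s.2) (sg h s).

Definition coal_play (A : {set token}) (sg : coal_strategy)
    (s : state) (p : nat -> state) : Prop :=
  p 0 = s /\
  forall t : nat, exists y : T,
    closed_nbhd e ((p t).1 (p t).2) y /\ p t.+1 = move (p t) y /\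
    ((p t).2 \in A -> y = sg [seq p i | i <- iota 0 t] (p t)).

Definition k_cops_guarantee (s : state) (k : nat) : Prop :=
  exists A : {set token}, (forall i, i \in A -> is_cop i) /\ #|A| = k /\
    exists sg : coal_strategy, coal_strategy_legal A sg /\
      forall p, coal_play A sg s p -> exists t, capture (p t).

Definition scn_is (s : state) (k : nat) : Prop :=
  1 <= k <= n /\ k_cops_guarantee s k /\
  forall j, 1 <= j < k -> ~ k_cops_guarantee s j.

Definition scn_inf (s : state) : Prop :=
  forall k, 1 <= k <= n -> ~ k_cops_guarantee s k.

(* pure positional strategy of token i (only its values on states with i to
   move are relevant) *)
Definition pos_strategy (i : token) (sg : state -> T) : Prop :=
  forall s : state, s.2 = i -> closed_nbhd e (s.1 i) (sg s).

Definition profile : Type := token -> state -> T.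

Definition profile_ok (sg : profile) : Prop := forall i, pos_strategy i (sg i).

Definition run (sg : profile) (s : state) (t : nat) : state :=
  iter t (fun s' : state => move s' (sg s'.2 s')) s.

Definition robber_payoff (gamma : R) (sg : profile) (s : state) : R :=
  match excluded_middle_informative
          (exists t : nat, capture (run sg s t)) with
  | left H => Ropp (pow gamma (@ex_minn (fun t => capture (run sg s t)) H))
  | right _ => R0
  end.

Definition replace (sg : profile) (A : pred token) (sg' : profile) : profile :=
  fun i => if A i then sg' i else sg i.

(* optimal (saddle point) profile of the two-player zero-sum CR game
   (cop player = all cops, robber player = R), from every initial state *)
Definition CR_optimal (gamma : R) (sg : profile) : Prop :=
  profile_ok sg /\
  forall s : state,
    (forall sr : profile, pos_strategy robber (sr robber) ->
       Rle (robber_payoff gamma (replace sg (pred1 robber) sr) s)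
           (robber_payoff gamma sg s)) /\
    (forall sc : profile, (forall i, is_cop i -> pos_strategy i (sc i)) ->
       Rle (robber_payoff gamma sg s)
           (robber_payoff gamma (replace sg is_cop sc) s)).

Definition CR_opt_component (gamma : R) (m : token) (tau : state -> T) : Prop :=
  exists sg : profile, CR_optimal gamma sg /\ sg m = tau.

Definition first_capture (sg : profile) (s : state) (t : nat) : bool :=
  capture (run sg s t) && [forall t' : 'I_t, ~~ capture (run sg s t')].

Definition leads_to_capture (sg : profile) (s : state) : Prop :=
  exists t, capture (run sg s t).

Definition capture_effected_by (sg : profile) (s : state) (m : token) : Prop :=
  is_cop m /\
  exists t, first_capture sg s t.+1 /\ (run sg s t).2 = m /\
            (run sg s t.+1).1 m = (run sg s t.+1).1 robber.

Definition hatC (gamma : R) (s : state) (m : token) : Prop :=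
  (exists sg, CR_optimal gamma sg /\ leads_to_capture sg s) /\
  forall sg, CR_optimal gamma sg -> leads_to_capture sg s ->
    capture_effected_by sg s m.

Definition sure_capture (gamma : R) (s : state) : Prop :=
  exists m : token, hatC gamma s m /\
    forall tau, CR_opt_component gamma m tau ->
    forall sg : profile, (forall i, i != m -> pos_strategy i (sg i)) ->
      let sg' := replace sg (pred1 m) (fun _ => tau) in
      exists t, first_capture sg' s t /\
                (run sg' s t).1 m = (run sg' s t).1 robber.

Definition noncapture (s : state) : bool := ~~ capture s.
Definition robber_to_move (s : state) : bool := s.2 == robber.

Definition in_G : Prop := cop_number_gt e n.

Definition in_G1 : Prop :=
  in_G /\ exists s : state, noncapture s /\ exists k, 2 <= k <= n /\ scn_is s k.

Definition in_G1' : Prop := in_G /\ ~ in_G1.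

Definition in_G2 : Prop :=
  in_G /\ forall s : state, robber_to_move s -> noncapture s -> scn_inf s.

Definition in_G2' : Prop := in_G1' /\ ~ in_G2.

Definition in_G3 (gamma : R) : Prop :=
  in_G2' /\ forall s : state, noncapture s -> scn_is s 1 -> sure_capture gamma s.

End Game.

(* If u is a leaf with neighbour v and every cop stands on v, the robber on u,
   who is to move, can only stay on u or step onto v; either way a cop catches
   him at once, so c(G|s) = 1.

   Conversely, put the robber on a non-leaf vertex.  As G is not in G_1(N), if
   some coalition of cops can force a capture, a single cop C_m can.  The robber
   then survives forever by moving, at each of his turns, to a non-leaf vertex
   next to him that is unoccupied and out of reach of C_m, all other cops
   standing still.  Such a vertex always exists.  Otherwise C_m corners the
   robber: every move of the robber lands on a cop, next to C_m, or on a pendant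
   vertex whose only exit is the robber's current vertex, onto which C_m steps.
   Possibly after relocating one other cop next to the robber, this gives a
   state s with c(G|s) = 1 in which two distinct occupied vertices lie next to
   the robber; stepping onto the one not held by the capturing cop hands the
   capture to another cop, against the sure-capture property of G_3(N). *)

From Stdlib Require Import Reals Classical.
From mathcomp Require Import all_boot zify.

Set Implicit Arguments.
Unset Strict Implicit.
Unset Printing Implicit Defensive.

Section Leaves.
Variables (T : finType) (e : rel T).

Definition hangs_on (z y : T) : bool := [forall x, e y x ==> (x == z)].

Lemma leaf_hangs_on y z : symmetric e -> leaf e y -> e z y -> hangs_on z y.
Proof.
move=> e_sym /cards1P [a nbrs_y] zy; have: z \in [set v | e y v] by rewrite inE e_sym.
rewrite nbrs_y inE => /eqP ->; apply/forallP => x; apply/implyP => yx.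
have: x \in [set v | e y v] by rewrite inE.
by rewrite nbrs_y inE.
Qed.

Lemma nonleaf_other_nbr z w : ~~ leaf e z -> e z w -> exists2 y, e z y & y != w.
Proof.
move=> nonleaf zw; have /set0Pn [y]: [set v | e z v] :\ w != set0.
  by apply: contraNneq nonleaf => no_other; rewrite /leaf (cardsD1 w) inE zw no_other cards0.
by rewrite !inE => /andP [yw zy]; exists y.
Qed.

End Leaves.

Section Plays.
Variables (T : finType) (e : rel T) (n : nat).
Implicit Types (s : state T n) (p : nat -> state T n) (i : token n).

Lemma moveE s y i : (move s y).1 i = if i == s.2 then y else s.1 i.
Proof. by rewrite ffunE. Qed.

Lemma val_next_tok i : (i : nat) < n -> next_tok i = i.+1 :> nat.
Proof. by move=> lt_in; rewrite /next_tok inordK modn_small ?ltnS. Qed.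

Lemma next_tok_robber : next_tok (robber n) = ord0.
Proof. by apply: val_inj; rewrite /next_tok /= modnn inordK. Qed.

Lemma is_copE i : is_cop i = (i < n).
Proof. by rewrite /is_cop -(inj_eq (@ord_inj _)) /= ltn_neqAle -ltnS ltn_ord andbT. Qed.

Lemma other_cop m : 1 < n -> exists2 c : token n, is_cop c & c != m.
Proof.
move=> n_gt1; exists (if m == ord0 then inord 1 else ord0).
  by rewrite is_copE; case: ifP => _ /=; rewrite ?inordK //; lia.
case: (eqVneq m ord0) => [->|m_ne0]; last by rewrite eq_sym.
by rewrite -(inj_eq (@ord_inj _)) inordK /=; lia.
Qed.

Lemma closed_nbhd_refl x : closed_nbhd e x x.
Proof. by rewrite /closed_nbhd eqxx. Qed.

Lemma closed_nbhd_sym : symmetric e -> symmetric (closed_nbhd e).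
Proof. by move=> e_sym x y; rewrite /closed_nbhd eq_sym e_sym. Qed.

Definition occupied s y : bool := [exists i, is_cop i && (s.1 i == y)].

Lemma occupiedP s y : reflect (exists2 i, is_cop i & s.1 i = y) (occupied s y).
Proof.
apply: (iffP existsP) => [[i /andP [ci /eqP iy]]|[i ci iy]]; first by exists i.
by exists i; rewrite ci iy eqxx.
Qed.

Lemma captureE s : capture s = occupied s (s.1 (robber n)).
Proof. by []. Qed.

Definition legal_play p :=
  forall t, exists2 y, closed_nbhd e ((p t).1 (p t).2) y & p t.+1 = move (p t) y.

Lemma coal_play_legal A sg s p : coal_play e A sg s p -> legal_play p.
Proof. by move=> [_ play_p] t; have [y [y_legal [-> _]]] := play_p t; exists y. Qed.

Variable p : nat -> state T n.
Hypothesis legal_p : legal_play p.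

Lemma play_tok t : (p t.+1).2 = next_tok (p t).2.
Proof. by have [y _ ->] := legal_p t. Qed.

Lemma play_unmoved t k i :
  (forall d, d < k -> (p (t + d)).2 != i) -> (p (t + k)).1 i = (p t).1 i.
Proof.
elim: k => [|k IHk] idle_i; first by rewrite addn0.
rewrite addnS; have [y _ ->] := legal_p (t + k).
have := idle_i k (ltnSn k); rewrite moveE eq_sym => /negbTE ->.
by apply: IHk => d lt_dk; apply: idle_i; rewrite ltnS ltnW.
Qed.

Section Round.
Variable t : nat.
Hypothesis robber_turn : (p t).2 = robber n.

Lemma round_tok j : j <= n -> (p (t + j.+1)).2 = j :> nat.
Proof.
elim: j => [|j IHj] le_jn; first by rewrite addn1 play_tok robber_turn next_tok_robber.
by rewrite addnS play_tok val_next_tok (IHj (ltnW le_jn)).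
Qed.

Lemma round_end : (p (t + n.+1)).2 = robber n.
Proof. exact/ord_inj/round_tok. Qed.

Lemma robber_waits j : j <= n -> (p (t + j.+1)).1 (robber n) = (p t.+1).1 (robber n).
Proof.
move=> le_jn; rewrite -addSnnS; apply: play_unmoved => d lt_dj.
by rewrite addSnnS -(inj_eq (@ord_inj _)) round_tok /=; lia.
Qed.

Lemma cop_waits i j : is_cop i -> j <= i.+1 -> (p (t + j)).1 i = (p t).1 i.
Proof.
rewrite is_copE => lt_in le_ji; apply: play_unmoved => -[|d] lt_dj.
  by rewrite addn0 robber_turn -(inj_eq (@ord_inj _)) /=; lia.
rewrite -(inj_eq (@ord_inj _)) round_tok /=; lia.
Qed.

Lemma cop_rests i j : i.+1 < j <= n.+1 -> (p (t + j)).1 i = (p (t + i.+2)).1 i.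
Proof.
move=> /andP [lt_ij le_jn]; have -> : t + j = t + i.+2 + (j - i.+2) by lia.
apply: play_unmoved => d lt_d.
rewrite -(inj_eq (@ord_inj _)) -addnA addSn round_tok /=; lia.
Qed.

Lemma cop_moves_once i j :
  is_cop i -> j <= n.+1 -> closed_nbhd e ((p t).1 i) ((p (t + j)).1 i).
Proof.
move=> cop_i le_jn; case: (leqP j i.+1) => [le_ji|lt_ij].
  by rewrite cop_waits // closed_nbhd_refl.
have [y legal_y move_y] := legal_p (t + i.+1).
have tok_i : (p (t + i.+1)).2 = i.
  by apply: ord_inj; rewrite round_tok // ltnW // -is_copE.
rewrite cop_rests ?lt_ij // addnS move_y moveE tok_i eqxx.
by move: legal_y; rewrite tok_i cop_waits.
Qed.

End Round.
End Plays.

Section Chase.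
Variables (T : finType) (e : rel T) (n : nat).
Implicit Types (s : state T n) (p : nat -> state T n) (c : token n).

Definition chase (z : T) : coal_strategy T n := fun _ st =>
  let w := st.1 st.2 in let r := st.1 (robber n) in
  if closed_nbhd e w r then r else if closed_nbhd e w z then z else w.

Lemma chase_legal A z : coal_strategy_legal e A (chase z).
Proof.
move=> h st _; rewrite /chase.
by case: ifP => // _; case: ifP => // _; apply: closed_nbhd_refl.
Qed.

Lemma chase_step c z s p t : coal_play e [set c] (chase z) s p -> (p t).2 = c ->
  p t.+1 = move (p t) (chase z [seq p i | i <- iota 0 t] (p t)).
Proof. by move=> [_ play_p] tok_c; have [y [_ [-> ->]]] := play_p t; rewrite ?tok_c ?inE. Qed.

Lemma chase_captures c z s p t :
    coal_play e [set c] (chase z) s p -> is_cop c -> (p t).2 = c ->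
  closed_nbhd e ((p t).1 c) ((p t).1 (robber n)) -> capture (p t.+1).
Proof.
move=> play_p cop_c tok_c near_r; rewrite captureE; apply/occupiedP; exists c => //.
rewrite (chase_step play_p tok_c) !moveE tok_c eqxx /chase tok_c near_r.
by rewrite eq_sym (negbTE cop_c).
Qed.

Lemma chase_approaches c z s p t :
    coal_play e [set c] (chase z) s p -> (p t).2 = c ->
    ~~ closed_nbhd e ((p t).1 c) ((p t).1 (robber n)) ->
  closed_nbhd e ((p t).1 c) z -> (p t.+1).1 c = z.
Proof.
move=> play_p tok_c far_r near_z.
by rewrite (chase_step play_p tok_c) moveE tok_c eqxx /chase tok_c (negbTE far_r) near_z.
Qed.

Definition corners s c : Prop :=
  closed_nbhd e (s.1 c) (s.1 (robber n)) /\
  forall y, closed_nbhd e (s.1 (robber n)) y ->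
    [|| occupied s y, closed_nbhd e (s.1 c) y | hangs_on e (s.1 (robber n)) y].

End Chase.

Lemma chase_catches_hanging_robber (T : finType) (e : rel T) (n : nat) c z s p :
    coal_play e [set c] (chase e z) s p -> is_cop c -> (p 0).2 = robber n -> (p c.+2).1 c = z ->
    closed_nbhd e z ((p 1).1 (robber n)) -> hangs_on e z ((p 1).1 (robber n)) ->
  exists t, capture (p t).
Proof.
move=> play_p cop_c turn0 pos_c near_y hang_y.
have legal_p := coal_play_legal play_p.
have lt_cn : c < n by rewrite -is_copE.
have turn1 := round_end legal_p turn0; rewrite add0n in turn1.
have pos_c1 : (p n.+1).1 c = z.
  have := cop_rests legal_p turn0 (i := c) (j := n.+1); rewrite !add0n pos_c; apply.
  by rewrite ltnS lt_cn /=.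
have rob1 : (p n.+1).1 (robber n) = (p 1).1 (robber n).
  by have := robber_waits legal_p turn0 (leqnn n); rewrite add0n.
have [y y_legal move_y] := legal_p n.+1.
have z_y : closed_nbhd e z y.
  move: y_legal; rewrite turn1 rob1 /closed_nbhd => /orP [/eqP <- //|adj_y].
  by move/forallP/(_ y): hang_y; rewrite adj_y => /eqP ->; rewrite eqxx.
exists (n.+1 + c.+1).+1; apply: (chase_captures play_p) => //.
  by apply: ord_inj; rewrite (round_tok legal_p turn1 (ltnW lt_cn)).
rewrite (cop_waits legal_p turn1) // (robber_waits legal_p turn1 (ltnW lt_cn)).
by rewrite move_y !moveE turn1 eqxx pos_c1.
Qed.

Lemma corners_guarantee_one (T : finType) (e : rel T) (n : nat) (s : state T n) (c : token n) :
  is_cop c -> s.2 = robber n -> corners e s c -> k_cops_guarantee e s 1.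
Proof.
set z := s.1 (robber n); set w := s.1 c => cop_c robber_turn [near_z cover].
have le_cn : c <= n by rewrite ltnW // -is_copE.
exists [set c]; split; first by move=> i; rewrite inE => /eqP ->.
split; first exact: cards1.
exists (chase e z); split; first exact: chase_legal.
move=> p play_p; have legal_p := coal_play_legal play_p.
have [p0 _] := play_p; have turn0 : (p 0).2 = robber n by rewrite p0.
have [y z_y p1] := legal_p 0; rewrite p0 robber_turn in z_y p1.
have rob1 : (p 1).1 (robber n) = y by rewrite p1 moveE robber_turn eqxx.
have tok_c : (p c.+1).2 = c.
  by apply: ord_inj; rewrite -[c.+1]add0n (round_tok legal_p turn0 le_cn).
have pos_c : (p c.+1).1 c = w by rewrite -[c.+1]add0n (cop_waits legal_p turn0) // p0.
have rob_c : (p c.+1).1 (robber n) = y.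
  by rewrite -[c.+1]add0n (robber_waits legal_p turn0 le_cn).
case: (boolP (closed_nbhd e w y)) => [near|far].
  by exists c.+2; apply: (chase_captures play_p) => //; rewrite pos_c rob_c.
case/or3P: (cover y z_y) => [occ|near|hang].
- exists 1; rewrite captureE rob1; case/occupiedP: occ => i cop_i pos_i.
  by apply/occupiedP; exists i; rewrite // p1 moveE robber_turn (negbTE cop_i).
- by rewrite near in far.
have pos_c2 : (p c.+2).1 c = z by apply: (chase_approaches play_p); rewrite ?pos_c ?rob_c.
by apply: (chase_catches_hanging_robber play_p); rewrite ?rob1.
Qed.

Section SureCapture.
Variables (T : finType) (e : rel T) (n : nat).
Implicit Types (s : state T n).

Lemma sure_capture_occupied_nbhd_eq gamma s x1 x2 :
    sure_capture e gamma s -> s.2 = robber n -> ~~ capture s ->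
    closed_nbhd e (s.1 (robber n)) x1 -> closed_nbhd e (s.1 (robber n)) x2 ->
  occupied s x1 -> occupied s x2 -> x1 = x2.
Proof.
move=> [m [[[sg0 [opt0 lead0]] effected] sure]] robber_turn free near1 near2 occ1 occ2.
have [cop_m _] := effected sg0 opt0 lead0.
apply/eqP; apply: contraR free => neq12.
pose x := if s.1 m == x1 then x2 else x1.
have far_m : s.1 m != x by rewrite /x; case: ifP => [/eqP ->|/negbT].
have [near_x occ_x] : closed_nbhd e (s.1 (robber n)) x /\ occupied s x by rewrite /x; case: ifP.
pose to_x : profile T n := fun i st =>
  if (i == robber n) && closed_nbhd e (st.1 (robber n)) x then x else st.1 i.
have legal_to_x i : i != m -> pos_strategy e i (to_x i).
  move=> _ st <-; rewrite /to_x; case: ifP => [/andP [/eqP -> //]|_].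
  exact: closed_nbhd_refl.
have [t [/andP [cap_t /forallP before_t] on_m]] :=
  sure (sg0 m) (ex_intro _ sg0 (conj opt0 erefl)) to_x legal_to_x.
set play := run _ s in cap_t before_t on_m.
have play1 : play 1 = move s x.
  by rewrite /play /run /= /replace /= robber_turn eq_sym (negbTE cop_m) /to_x eqxx near_x.
have cap1 : capture (play 1).
  rewrite captureE play1 moveE robber_turn eqxx; case/occupiedP: occ_x => c cop_c pos_c.
  by apply/occupiedP; exists c; rewrite // moveE robber_turn (negbTE cop_c).
case: t cap_t before_t on_m => [|[|t]] cap_t before_t on_m.
- by rewrite cap_t.
- move: on_m; rewrite play1 !moveE robber_turn eqxx (negbTE cop_m) => /eqP.
  by rewrite (negbTE far_m).
- by have := before_t (Ordinal (isT : 1 < t.+2)); rewrite cap1.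
Qed.
End SureCapture.


Lemma not_G1_guarantee_one (T : finType) (e : rel T) (n : nat) (s : state T n) k :
    in_G1' e n -> ~~ capture s -> 1 <= k <= n ->
  k_cops_guarantee e s k -> k_cops_guarantee e s 1.
Proof.
move=> [inG notG1] free; elim/ltn_ind: k => k IHk /andP [k_gt0 le_kn] guar_k.
case: (classic (exists2 j, 0 < j < k & k_cops_guarantee e s j)).
  move=> [j /andP [j_gt0 lt_jk] guar_j]; apply: (IHk j) => //.
  by rewrite j_gt0 (leq_trans (ltnW lt_jk)).
move=> no_smaller; case: (ltngtP k 1) => [lt_k1|lt_1k|eq_k1]; last by rewrite -eq_k1.
  by rewrite ltnNge k_gt0 in lt_k1.
case: notG1; split=> //; exists s; split=> //; exists k; split; first by rewrite lt_1k.
split; first by rewrite k_gt0.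
by split=> // j lt_jk guar_j; apply: no_smaller; exists j.
Qed.

Lemma G3_sure_capture (T : finType) (e : rel T) (n : nat) gamma (s : state T n) k :
    in_G3 e n gamma -> ~~ capture s -> 1 <= k <= n ->
  k_cops_guarantee e s k -> sure_capture e gamma s.
Proof.
move=> [[notG1 _] sure] free k_range guar_k.
have guar_1 := not_G1_guarantee_one notG1 free k_range guar_k.
have n_gt0 : 0 < n by case/andP: k_range; apply: leq_trans.
apply: sure => //; split; first by rewrite n_gt0.
by split=> // j /andP [j_gt0 /leq_trans/(_ j_gt0)]; rewrite ltnn.
Qed.

Section Escape.
Variables (T : finType) (e : rel T) (n : nat) (gamma : R).
Hypotheses (G3 : in_G3 e n gamma) (e_sym : symmetric e).
Implicit Types (s : state T n) (c m : token n).

Lemma G3_cornering_cop_alone s c x :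
    is_cop c -> s.2 = robber n -> ~~ capture s -> corners e s c ->
  closed_nbhd e (s.1 (robber n)) x -> occupied s x -> x = s.1 c.
Proof.
move=> cop_c robber_turn free corner near_x occ_x.
have n_range : 1 <= 1 <= n by rewrite /= (leq_ltn_trans (leq0n c)) -?is_copE.
have sure := G3_sure_capture G3 free n_range (corners_guarantee_one cop_c robber_turn corner).
apply: (sure_capture_occupied_nbhd_eq sure) => //; first by case: corner; rewrite closed_nbhd_sym.
by apply/occupiedP; exists c.
Qed.

Definition relocate s c x : state T n := ([ffun i => if i == c then x else s.1 i], s.2).

Definition escape m s y : bool :=
  [&& closed_nbhd e (s.1 (robber n)) y, ~~ leaf e y, ~~ occupied s y & ~~ closed_nbhd e (s.1 m) y].

Hypothesis e_irr : irreflexive e.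

Lemma escape_exists m s :
    1 < n -> is_cop m -> s.2 = robber n -> ~~ capture s -> ~~ leaf e (s.1 (robber n)) ->
  exists y, escape m s y.
Proof.
set z := s.1 (robber n); set w := s.1 m => n_gt1 cop_m robber_turn free nonleaf_z.
apply/existsP; apply: contraT => /existsPn no_escape.
have cover y : closed_nbhd e z y -> ~~ leaf e y -> occupied s y || closed_nbhd e w y.
  by move=> zy nonleaf_y; move: (no_escape y); rewrite /escape zy nonleaf_y /= negb_and !negbK.
have hangs y : closed_nbhd e z y -> leaf e y -> hangs_on e z y.
  move=> zy leaf_y; apply: leaf_hangs_on => //; move: zy; rewrite /closed_nbhd.
  by case/orP => // /eqP zy; move: leaf_y; rewrite -zy (negbTE nonleaf_z).
have near_wz : closed_nbhd e w z.
  have /orP [occ|//] := cover z (closed_nbhd_refl e z) nonleaf_z.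
  by move: free; rewrite captureE occ.
have w_ne_z : w != z by apply: contraNneq free => wz; rewrite captureE; apply/occupiedP; exists m.
have zw : e z w by move: near_wz; rewrite closed_nbhd_sym // /closed_nbhd eq_sym (negbTE w_ne_z).
have corner s' : s'.1 (robber n) = z -> s'.1 m = w ->
    (forall y, closed_nbhd e z y -> ~~ leaf e y -> occupied s' y || closed_nbhd e w y) ->
  corners e s' m.
  move=> rob' m' cover'; rewrite /corners rob' m'; split=> // y zy.
  case: (boolP (leaf e y)) => [/(hangs y zy) ->|/(cover' y zy)]; first by rewrite !orbT.
  by case/orP=> ->; rewrite ?orbT.
case: (boolP [exists i, [&& is_cop i, closed_nbhd e z (s.1 i) & s.1 i != w]]).
  case/existsP => i /and3P [cop_i near_i /eqP[]].
  apply: (G3_cornering_cop_alone cop_m robber_turn free (corner s _ _ cover)) => //.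
  by apply/occupiedP; exists i.
move/existsPn => all_at_w; have [y' zy' y'_ne_w] := nonleaf_other_nbr nonleaf_z zw.
have [c1 cop_c1 c1_ne_m] := other_cop m n_gt1.
set s' := relocate s c1 y'.
have pos' i : s'.1 i = if i == c1 then y' else s.1 i by rewrite ffunE.
have rob' : s'.1 (robber n) = z by rewrite pos' eq_sym (negbTE cop_c1).
have m' : s'.1 m = w by rewrite pos' eq_sym (negbTE c1_ne_m).
have free' : ~~ capture s'.
  rewrite captureE rob'; apply/occupiedP => -[i cop_i]; rewrite pos'.
  case: eqP => [_ y'z|_ iz]; first by move: zy'; rewrite y'z e_irr.
  by move: free; rewrite captureE; case/occupiedP; exists i.
have cover' y : closed_nbhd e z y -> ~~ leaf e y -> occupied s' y || closed_nbhd e w y.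
  move=> zy nonleaf_y; case/orP: (cover y zy nonleaf_y) => [|->]; last by rewrite orbT.
  case/occupiedP=> i cop_i iy.
  move: (all_at_w i); rewrite cop_i iy zy /= negbK => /eqP ->.
  by rewrite closed_nbhd_refl orbT.
case/negP: y'_ne_w; apply/eqP; rewrite -m'.
apply: (G3_cornering_cop_alone (s := s') cop_m robber_turn free' (corner s' rob' m' cover')).
  by rewrite rob' /closed_nbhd zy' orbT.
by apply/occupiedP; exists c1; rewrite // pos' eqxx.
Qed.

End Escape.

Section Flee.
Variables (T : finType) (e : rel T) (n : nat) (gamma : R).
Hypotheses (G3 : in_G3 e n gamma) (e_sym : symmetric e) (e_irr : irreflexive e).
Hypothesis n_gt1 : 1 < n.
Variables (m : token n) (p : nat -> state T n).
Hypotheses (cop_m : is_cop m) (legal_p : legal_play e p).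
Hypothesis others_stay : forall t i, is_cop i -> i != m -> (p t.+1).1 i = (p t).1 i.
Hypothesis robber_flees : forall t, (p t).2 = robber n -> (exists y, escape e m (p t) y) ->
  escape e m (p t) ((p t.+1).1 (robber n)).

Lemma others_never_move t i : is_cop i -> i != m -> (p t).1 i = (p 0).1 i.
Proof. by move=> cop_i i_ne_m; elim: t => // t <-; apply: others_stay. Qed.

Lemma flee_round t :
    (p t).2 = robber n -> ~~ capture (p t) -> ~~ leaf e ((p t).1 (robber n)) ->
  [/\ (p (t + n.+1)).2 = robber n, ~~ leaf e ((p (t + n.+1)).1 (robber n))
    & forall j, j <= n.+1 -> ~~ capture (p (t + j))].
Proof.
move=> robber_turn free nonleaf.
have /and4P [_ nonleaf_y unoccupied_y far_y] :=
  robber_flees robber_turn (escape_exists G3 e_sym e_irr n_gt1 cop_m robber_turn free nonleaf).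
set y := (p t.+1).1 (robber n) in nonleaf_y unoccupied_y far_y.
have rob_y j : j <= n -> (p (t + j.+1)).1 (robber n) = y by apply: robber_waits.
split; first exact: round_end.
  by rewrite rob_y.
move=> [|j] le_jn; first by rewrite addn0.
rewrite captureE rob_y //; apply/occupiedP => -[i cop_i pos_i].
case: (eqVneq i m) => [i_m|i_ne_m].
  by move: far_y; rewrite -pos_i i_m (cop_moves_once legal_p robber_turn cop_m le_jn).
move/occupiedP: unoccupied_y; apply; exists i => //.
by rewrite -pos_i !(others_never_move _ cop_i).
Qed.

Lemma flee_never_captured :
    (p 0).2 = robber n -> ~~ capture (p 0) -> ~~ leaf e ((p 0).1 (robber n)) ->
  forall t, ~~ capture (p t).
Proof.
move=> turn0 free0 nonleaf0.
have ready k : [/\ (p (k * n.+1)).2 = robber n, ~~ capture (p (k * n.+1))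
                 & ~~ leaf e ((p (k * n.+1)).1 (robber n))].
  elim: k => [|k [turn free nonleaf]]; first by rewrite mul0n.
  have [turn' nonleaf' free'] := flee_round turn free nonleaf.
  by rewrite mulSn addnC; split; rewrite ?free'.
move=> t; rewrite (divn_eq t n.+1).
have [turn free nonleaf] := ready (t %/ n.+1).
have [_ _ free'] := flee_round turn free nonleaf.
by rewrite free' // ltnW // ltn_pmod.
Qed.

End Flee.

Section History.
Variables (T : finType) (n : nat) (c : seq (state T n) -> state T n -> T) (s : state T n).

Fixpoint history t : seq (state T n) * state T n :=
  if t is t'.+1 then
    let: (h, st) := history t' in (rcons h st, move st (c h st))
  else ([::], s).

Definition play_of t := (history t).2.

Lemma history_past t : (history t).1 = [seq play_of i | i <- iota 0 t].
Proof.
rewrite /play_of; elim: t => // t IHt.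
by rewrite -[in RHS]addn1 iotaD map_cat add0n cats1 -IHt /=; case: (history t).
Qed.

Lemma play_ofS t : play_of t.+1 = move (play_of t) (c [seq play_of i | i <- iota 0 t] (play_of t)).
Proof. by rewrite -history_past /play_of /=; case: (history t). Qed.

End History.

Definition flee (T : finType) (e : rel T) (n : nat) (m : token n) (st : state T n) : T :=
  odflt (st.1 (robber n)) [pick y | escape e m st y].

Lemma flee_escape (T : finType) (e : rel T) (n : nat) (m : token n) (st : state T n) :
  (exists y, escape e m st y) -> escape e m st (flee e m st).
Proof. by rewrite /flee => -[y esc_y]; case: pickP => [//|/(_ y)]; rewrite esc_y. Qed.

Lemma flee_legal (T : finType) (e : rel T) (n : nat) (m : token n) (st : state T n) :
  closed_nbhd e (st.1 (robber n)) (flee e m st).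
Proof. by rewrite /flee; case: pickP => [y /and4P []|_] //=; apply: closed_nbhd_refl. Qed.

Lemma G3_nonleaf_scn_inf (T : finType) (e : rel T) (n : nat) gamma (s : state T n) :
    1 < n -> symmetric e -> irreflexive e -> in_G3 e n gamma ->
  s.2 = robber n -> ~~ capture s -> ~~ leaf e (s.1 (robber n)) -> scn_inf e s.
Proof.
move=> n_gt1 e_sym e_irr G3 robber_turn free nonleaf k k_range guar_k.
have [A [copA [/eqP/cards1P [m A_m] [sg [legal_sg win]]]]] :=
  not_G1_guarantee_one G3.1.1 free k_range guar_k.
subst A.
have cop_m : is_cop m by apply: copA; rewrite inE.
pose strat h st := if st.2 == m then sg h st
                   else if st.2 == robber n then flee e m st else st.1 st.2.
pose p := play_of strat s.
have legal_strat h (st : state T n) : closed_nbhd e (st.1 st.2) (strat h st).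
  rewrite /strat; case: eqP => [tok_m|_]; first by apply: legal_sg; rewrite tok_m inE.
  by case: eqP => [->|_]; [apply: flee_legal | apply: closed_nbhd_refl].
have play_p : coal_play e [set m] sg s p.
  split=> // t; exists (strat [seq p i | i <- iota 0 t] (p t)); split=> //.
  by split; [apply: play_ofS | rewrite inE /strat => ->].
have [t] := win p play_p; apply/negP.
apply: (flee_never_captured G3 e_sym e_irr n_gt1 cop_m (coal_play_legal play_p)) => //.
- move=> t' i cop_i i_ne_m; rewrite /p play_ofS moveE.
  by case: eqP => [tok_i|//]; rewrite /strat -tok_i (negbTE i_ne_m) (negbTE cop_i).
- move=> t' tok_r escapable; rewrite /p play_ofS moveE tok_r eqxx /strat tok_r.
  by rewrite eq_sym (negbTE cop_m) eqxx; apply: flee_escape.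
Qed.

Lemma leaf_one_cop_state (T : finType) (e : rel T) (n : nat) (u : T) :
    0 < n -> symmetric e -> irreflexive e -> leaf e u ->
  exists s : state T n, [/\ s.2 = robber n, ~~ capture s, s.1 (robber n) = u
                          & k_cops_guarantee e s 1].
Proof.
move=> n_gt0 e_sym e_irr /cards1P [v nbrs_u].
have nbr_u y : e u y = (y == v) by rewrite -in_set1 -nbrs_u inE.
have vu : e v u by rewrite e_sym nbr_u.
pose s : state T n := ([ffun i => if i == robber n then u else v], robber n).
have pos_s i : s.1 i = if i == robber n then u else v by rewrite ffunE.
have cop0 : is_cop (ord0 : token n) by rewrite is_copE.
have rob_s : s.1 (robber n) = u by rewrite pos_s eqxx.
have cop_s i : is_cop i -> s.1 i = v by move=> cop_i; rewrite pos_s (negbTE cop_i).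
exists s; split=> //.
  rewrite captureE rob_s; apply/occupiedP => -[i /cop_s -> vu_eq].
  by move: vu; rewrite vu_eq e_irr.
apply: (corners_guarantee_one cop0) => //; rewrite /corners rob_s cop_s //.
split=> [|y]; first by rewrite /closed_nbhd vu orbT.
by rewrite /closed_nbhd nbr_u => /orP [/eqP <-|/eqP ->]; rewrite ?vu ?eqxx ?orbT.
Qed.

Theorem mainTheorem15 (T : finType) (e : rel T) (n : nat) (gamma : R) :
  Rlt R0 gamma -> Rlt gamma R1 ->
  simple_connected_graph e ->
  3 <= n.+1 ->
  in_G3 e n gamma ->
  forall u : T,
    ~~ leaf e u <->
    (forall s : state T n,
       robber_to_move s -> noncapture s -> s.1 (robber n) = u -> scn_inf e s).
Proof.
(* The range of gamma matters only through the hypothesis in_G3. *)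
move=> _ _ [e_sym [e_irr _]] n_gt1 G3 u; split.
  move=> nonleaf_u s /eqP robber_turn free rob_u.
  by apply: (G3_nonleaf_scn_inf n_gt1 e_sym e_irr G3 robber_turn free); rewrite rob_u.
move=> all_inf; apply/negP => leaf_u.
have [s [robber_turn free rob_u guar_1]] := leaf_one_cop_state (ltnW n_gt1) e_sym e_irr leaf_u.
exact: (all_inf s (introT eqP robber_turn) free rob_u 1 (ltnW n_gt1) guar_1).
Qed.
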